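(* Let $\mu>1$, $\gamma=\mu\gamma^N_1$, let $p\ge2$ and $q=p/(p-1)$, and let $(\rho_k)_{k\ge1}$ be an increasing positive sequence with $K_q<\infty$. Then there exists a constant $B_p<\infty$ (depending on $p,\mu,(\rho_k)$ but not on $N$ or $\delta$) such that for all $N\ge3$, all $\delta>0$ and all $z\in C_\delta$, $$\|x(Nz)\|_p^p\le\delta^p\,N\,B_p.$$
   Context: $\gamma^N_1=\frac1{2\sin^2(\pi/N)}$; $\lambda_{k,N}=-1+2\gamma\sin^2(k\pi/N)$ for $0\le k\le N-1$ (indices modulo $N$). $\omega=e^{2\pi i/N}$. $\widehat{\mathbb{R}}^N=\{z\in\mathbb{C}^N:z_k=\overline{z_{N-k}}\ \forall k\}$ (so $z_0\in\mathbb{R}$). For $z\in\widehat{\mathbb{R}}^N$, $x(Nz)\in\mathbb{R}^N$ has components $x_j(Nz)=\sum_{k=0}^{N-1}\omega^{jk}z_k$ (inverse map: $z_k=\frac1N\sum_j\omega^{-jk}x_j$). Given an increasing positive sequence $(\rho_k)_{k\ge1}$, set $r_{0,N}=1$ and $r_{k,N}=r_{N-k,N}=\rho_k$ for $1\le k\le\lfloor N/2\rfloor$; $K_p=\big(\sum_{k\ge1}\rho_k^p/k^p\big)^{1/p}$; for $\delta>0$, $C_\delta=\{z\in\widehat{\mathbb{R}}^N:|z_k|\le\delta\,r_{k,N}/\sqrt{|\lambda_{k,N}|},\ 0\le k\le N-1\}$. $\|y\|_p=(\sum_j|y_j|^p)^{1/p}$. *)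

From Stdlib Require Import Reals Lra Lia Arith.
Open Scope R_scope.

Fixpoint sumN (n : nat) (f : nat -> R) : R :=
  match n with
  | O => 0
  | S m => sumN m f + f m
  end.

(* real power x^p for x >= 0, with the convention 0^p = 0 (p > 0) *)
Definition rpow (x p : R) : R := if Rle_dec x 0 then 0 else Rpower x p.

Definition cmod (a b : R) : R := sqrt (a * a + b * b).

Definition gamma1 (N : nat) : R := / (2 * (sin (PI / INR N)) ^ 2).

Definition lambda (gamma : R) (N k : nat) : R :=
  -1 + 2 * gamma * (sin (INR k * PI / INR N)) ^ 2.

Definition rkN (rho : nat -> R) (N k : nat) : R :=
  if Nat.eqb k 0 then 1 else rho (Nat.min k (N - k)).

(* z in \hat R^N, given by real parts a and imaginary parts b on indices 0..N-1:
   z_k = conj (z_{N-k}) with indices modulo N *)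
Definition in_Rhat (N : nat) (a b : nat -> R) : Prop :=
  forall k, (k < N)%nat ->
    a k = a ((N - k) mod N)%nat /\ b k = - b ((N - k) mod N)%nat.

Definition in_Cdelta (gamma : R) (rho : nat -> R) (delta : R) (N : nat)
    (a b : nat -> R) : Prop :=
  in_Rhat N a b /\
  forall k, (k < N)%nat ->
    cmod (a k) (b k) <= delta * rkN rho N k / sqrt (Rabs (lambda gamma N k)).

(* x_j(Nz) = sum_k omega^{jk} z_k, omega = exp(2 pi i / N): real and imaginary parts *)
Definition xre (N : nat) (a b : nat -> R) (j : nat) : R :=
  sumN N (fun k => a k * cos (2 * PI * INR (j * k) / INR N)
                 - b k * sin (2 * PI * INR (j * k) / INR N)).
Definition xim (N : nat) (a b : nat -> R) (j : nat) : R :=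
  sumN N (fun k => a k * sin (2 * PI * INR (j * k) / INR N)
                 + b k * cos (2 * PI * INR (j * k) / INR N)).

Definition xnorm_pp (N : nat) (a b : nat -> R) (p : R) : R :=
  sumN N (fun j => rpow (cmod (xre N a b j) (xim N a b j)) p).

Definition Kq_finite (rho : nat -> R) (q : R) : Prop :=
  exists l, Un_cv (fun n => sum_f_R0 (fun k => rpow (rho (S k) / INR (S k)) q) n) l.

(* Write q = p/(p-1).  The proof combines two independent estimates.
   1. A Hausdorff–Young inequality with a constant C_p independent of N:
        ||x(Nz)||_p^p <= N C_p (sum_k |z_k|^q)^(p-1).
      For p = 2 this is Parseval's identity.  For p > 2 it is a real-interpolation
      argument between the trivial bound |x_j| <= ||z||_1 and Parseval: with
      Q = sum_k |z_k|^q, the coefficients with t |z_k|^(1/(p-1)) > 2Q have l^1 norm at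
      most t/2, so |x_j| > t forces the transform of the remaining "low" coefficients
      to exceed t/2.  A layer-cake decomposition of |x_j|^p over dyadic levels t, a
      Chebyshev bound at each level, Parseval over j and a geometric series in t give
      the inequality.
   2. A box estimate: lambda_k >= (mu-1)/9 m^2 with m = min(k, N-k), because
      sin(m x)/sin x >= max(1, m/3) when m x <= pi/2.  Hence for z in C_delta
      |z_k| <= delta rho_m / (sqrt((mu-1)/9) m), and sum_k |z_k|^q <= delta^q K with
      K = 1 + 2 (9/(mu-1))^(q/2) K_q^q. *)
From Stdlib Require Import Reals Lra Lia Arith.
From Coquelicot Require Import Coquelicot.
Open Scope R_scope.

Lemma sumN_ext n f g : (forall k, (k < n)%nat -> f k = g k) -> sumN n f = sumN n g.
Proof. induction n; simpl; intros H; auto. rewrite IHn, H; auto. Qed.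

Lemma sumN_le n f g : (forall k, (k < n)%nat -> f k <= g k) -> sumN n f <= sumN n g.
Proof.
  induction n; simpl; intros H; [lra|].
  assert (sumN n f <= sumN n g) by (apply IHn; intros; apply H; lia).
  specialize (H n ltac:(lia)). lra.
Qed.

Lemma sumN_const n c : sumN n (fun _ => c) = INR n * c.
Proof. induction n; simpl sumN; [simpl; lra|]. rewrite IHn, S_INR; lra. Qed.

Lemma sumN_nonneg n f : (forall k, (k < n)%nat -> 0 <= f k) -> 0 <= sumN n f.
Proof.
  intros H. replace 0 with (sumN n (fun _ => 0)) by (rewrite sumN_const; ring).
  apply sumN_le; auto.
Qed.

Lemma sumN_plus n f g : sumN n (fun k => f k + g k) = sumN n f + sumN n g.
Proof. induction n; simpl; [lra|]. rewrite IHn; lra. Qed.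

Lemma sumN_scal n c f : sumN n (fun k => c * f k) = c * sumN n f.
Proof. induction n; simpl; [lra|]. rewrite IHn; lra. Qed.

Lemma sumN_swap n m (f : nat -> nat -> R) :
  sumN n (fun i => sumN m (fun j => f i j)) = sumN m (fun j => sumN n (fun i => f i j)).
Proof.
  induction n; simpl.
  - rewrite sumN_const; ring.
  - rewrite IHn, <- sumN_plus. reflexivity.
Qed.

Lemma sumN_telescope n (F : nat -> R) : sumN n (fun j => F (S j) - F j) = F n - F O.
Proof. induction n; simpl; [lra|]. rewrite IHn; lra. Qed.

Lemma sumN_mul n m f g :
  sumN n f * sumN m g = sumN n (fun k => sumN m (fun l => f k * g l)).
Proof. induction n; simpl; [lra|]. rewrite <- IHn, sumN_scal. lra. Qed.

Lemma sumN_delta n k (g : nat -> R) : (k < n)%nat ->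
  sumN n (fun l => if Nat.eq_dec k l then g l else 0) = g k.
Proof.
  induction n; intros H; [lia|]. simpl. destruct (Nat.eq_dec k n) as [<-|Hne].
  - rewrite (sumN_ext k _ (fun _ => 0)), sumN_const; [ring|].
    intros l Hl. destruct (Nat.eq_dec k l); [lia|auto].
  - rewrite IHn by lia. ring.
Qed.

Lemma sumN_shift n f : sumN (S n) f = f O + sumN n (fun k => f (S k)).
Proof. induction n; [simpl; lra|]. simpl in *. rewrite IHn. lra. Qed.

Lemma sumN_reverse n f : sumN n f = sumN n (fun k => f (n - 1 - k)%nat).
Proof.
  induction n; auto.
  rewrite (sumN_shift n (fun k => f (S n - 1 - k)%nat)). simpl sumN at 1.
  rewrite IHn, Rplus_comm. replace (S n - 1 - 0)%nat with n by lia. f_equal.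
  apply sumN_ext. intros k Hk. f_equal. lia.
Qed.

Lemma sumN_term_le n f k :
  (forall i, (i < n)%nat -> 0 <= f i) -> (k < n)%nat -> f k <= sumN n f.
Proof.
  induction n; intros H Hk; [lia|]. simpl.
  assert (0 <= sumN n f) by (apply sumN_nonneg; intros; apply H; lia).
  destruct (Nat.eq_dec k n) as [->|Hne]; [lra|].
  assert (f k <= sumN n f) by (apply IHn; [intros; apply H|]; lia).
  specialize (H n ltac:(lia)). lra.
Qed.

Lemma sumN_le_series_limit f l :
  (forall k, 0 <= f k) -> Un_cv (fun n => sum_f_R0 f n) l -> forall n, sumN n f <= l.
Proof.
  intros Hf Hl.
  assert (Hgrow : Un_growing (fun n => sum_f_R0 f n)).
  { intros n. simpl. specialize (Hf (S n)). lra. }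
  assert (Hpartial : forall n, sumN (S n) f = sum_f_R0 f n).
  { induction n; simpl in *; [lra|]. rewrite IHn. reflexivity. }
  intros [|n].
  - pose proof (growing_ineq _ _ Hgrow Hl 0). specialize (Hf 0%nat). simpl in *. lra.
  - rewrite Hpartial. apply growing_ineq; auto.
Qed.

Lemma rpow_pos x e : 0 < x -> rpow x e = Rpower x e.
Proof. intros H. unfold rpow. destruct (Rle_dec x 0); [lra|auto]. Qed.

Lemma rpow_nonpos x e : x <= 0 -> rpow x e = 0.
Proof. intros H. unfold rpow. destruct (Rle_dec x 0); [auto|lra]. Qed.

Lemma rpow_gt0 x e : 0 < x -> 0 < rpow x e.
Proof. intros H. rewrite rpow_pos by auto. apply exp_pos. Qed.

Lemma rpow_ge0 x e : 0 <= rpow x e.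
Proof.
  destruct (Rle_dec x 0); [rewrite rpow_nonpos; lra|].
  left; apply rpow_gt0; lra.
Qed.

Lemma rpow_le x y e : 0 <= e -> x <= y -> rpow x e <= rpow y e.
Proof.
  intros He H. destruct (Rle_dec x 0).
  - rewrite (rpow_nonpos x) by auto. apply rpow_ge0.
  - rewrite !rpow_pos by lra. apply Rle_Rpower_l; lra.
Qed.

Lemma rpow_mult x y e : 0 <= x -> 0 <= y -> rpow (x * y) e = rpow x e * rpow y e.
Proof.
  intros Hx Hy. destruct (Req_dec x 0) as [->|Hx0].
  { rewrite Rmult_0_l, rpow_nonpos; [ring|lra]. }
  destruct (Req_dec y 0) as [->|Hy0].
  { rewrite Rmult_0_r, (rpow_nonpos 0); [ring|lra]. }
  rewrite !rpow_pos by (try apply Rmult_lt_0_compat; lra).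
  symmetry; apply Rpower_mult_distr; lra.
Qed.

Lemma rpow_plus x e1 e2 : 0 <= x -> rpow x (e1 + e2) = rpow x e1 * rpow x e2.
Proof.
  intros Hx. destruct (Req_dec x 0) as [->|Hx0]; [rewrite !rpow_nonpos; lra|].
  rewrite !rpow_pos by lra. apply Rpower_plus.
Qed.

Lemma rpow_rpow x e1 e2 : 0 <= x -> rpow (rpow x e1) e2 = rpow x (e1 * e2).
Proof.
  intros Hx. destruct (Req_dec x 0) as [->|Hx0].
  { rewrite !(rpow_nonpos 0); lra. }
  rewrite (rpow_pos (rpow x e1)) by (apply rpow_gt0; lra).
  rewrite !rpow_pos by lra. apply Rpower_mult.
Qed.

Lemma rpow_1 x : 0 <= x -> rpow x 1 = x.
Proof.
  intros Hx. destruct (Req_dec x 0) as [->|Hx0]; [rewrite !rpow_nonpos; lra|].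
  rewrite rpow_pos by lra. apply Rpower_1; lra.
Qed.

Lemma rpow_2 x : 0 <= x -> rpow x 2 = x * x.
Proof.
  intros Hx. destruct (Req_dec x 0) as [->|Hx0]; [rewrite !rpow_nonpos; lra|].
  rewrite rpow_pos by lra. replace 2 with (INR 2) by (simpl; lra).
  rewrite Rpower_pow by lra. simpl; ring.
Qed.

Lemma rpow_inv x e : 0 < x -> rpow (/ x) e = / rpow x e.
Proof.
  intros Hx. rewrite !rpow_pos by (try apply Rinv_0_lt_compat; lra).
  unfold Rpower. rewrite ln_Rinv, <- exp_Ropp by auto. f_equal. ring.
Qed.

Lemma rpow_two_gt1 e : 0 < e -> 1 < rpow 2 e.
Proof.
  intros He. rewrite rpow_pos by lra. unfold Rpower. rewrite <- exp_0.
  apply exp_increasing. assert (0 < ln 2) by (rewrite <- ln_1; apply ln_increasing; lra).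
  nra.
Qed.

(* A bound s <= d^q K with q = p/(p-1), raised to the power p - 1, since q (p - 1) = p. *)
Lemma rpow_le_dual_power p d K s : 1 < p -> 0 <= d -> 0 <= K ->
  s <= rpow d (p / (p - 1)) * K -> rpow s (p - 1) <= rpow d p * rpow K (p - 1).
Proof.
  intros Hp Hd HK Hs. eapply Rle_trans; [apply rpow_le; [lra|exact Hs]|].
  rewrite rpow_mult, rpow_rpow by (try apply rpow_ge0; lra).
  replace (p / (p - 1) * (p - 1)) with p by (field; lra). lra.
Qed.

Lemma cmod_ge0 a b : 0 <= cmod a b.
Proof. apply sqrt_pos. Qed.

Lemma cmod_sq a b : cmod a b * cmod a b = a * a + b * b.
Proof. apply sqrt_sqrt. nra. Qed.

Lemma cmod_00 : cmod 0 0 = 0.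
Proof. unfold cmod. rewrite Rmult_0_l, Rplus_0_l. apply sqrt_0. Qed.

Lemma cmod_Cmod a b : cmod a b = Cmod (a, b).
Proof. unfold cmod, Cmod. simpl. f_equal. ring. Qed.

Lemma cmod_triangle a b c d : cmod (a + c) (b + d) <= cmod a b + cmod c d.
Proof. rewrite !cmod_Cmod. apply (Cmod_triangle (a, b) (c, d)). Qed.

Lemma cmod_rotate a b C S :
  C * C + S * S = 1 -> cmod (a * C - b * S) (a * S + b * C) = cmod a b.
Proof.
  intros H. unfold cmod. f_equal.
  transitivity ((a * a + b * b) * (C * C + S * S)); [ring|]. rewrite H; ring.
Qed.

Lemma cmod_sumN n f g :
  cmod (sumN n f) (sumN n g) <= sumN n (fun k => cmod (f k) (g k)).
Proof.
  induction n; simpl; [rewrite cmod_00; lra|].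
  eapply Rle_trans; [apply cmod_triangle|]. lra.
Qed.
(** * The discrete Fourier transform *)

(* Geometric sums of cosines and sines, in telescoped form (Lagrange's identities). *)
Lemma cos_sum_telescope n h :
  sumN n (fun j => cos (2 * h * INR j)) * (2 * sin h) = sin (2 * h * INR n - h) + sin h.
Proof.
  rewrite Rmult_comm, <- sumN_scal.
  rewrite (sumN_ext n _ (fun j => sin (2 * h * INR (S j) - h) - sin (2 * h * INR j - h))).
  - rewrite (sumN_telescope n (fun j => sin (2 * h * INR j - h))). simpl INR.
    replace (2 * h * 0 - h) with (- h) by ring. rewrite sin_neg. ring.
  - intros j _. rewrite S_INR. replace (2 * h * (INR j + 1) - h) with (2 * h * INR j + h) by ring.
    rewrite sin_plus, sin_minus. ring.
Qed.

Lemma sin_sum_telescope n h :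
  sumN n (fun j => sin (2 * h * INR j)) * (2 * sin h) = cos h - cos (2 * h * INR n - h).
Proof.
  rewrite Rmult_comm, <- sumN_scal.
  rewrite (sumN_ext n _ (fun j => - cos (2 * h * INR (S j) - h) - - cos (2 * h * INR j - h))).
  - rewrite (sumN_telescope n (fun j => - cos (2 * h * INR j - h))). simpl INR.
    replace (2 * h * 0 - h) with (- h) by ring. rewrite cos_neg. ring.
  - intros j _. rewrite S_INR. replace (2 * h * (INR j + 1) - h) with (2 * h * INR j + h) by ring.
    rewrite cos_plus, cos_minus. ring.
Qed.

Definition phase (N j k : nat) : R := 2 * PI * INR (j * k) / INR N.

Lemma dft_orthogonality N k l : (k < N)%nat -> (l < N)%nat ->
  sumN N (fun j => cos (phase N j k - phase N j l)) = (if Nat.eq_dec k l then INR N else 0) /\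
  sumN N (fun j => sin (phase N j k - phase N j l)) = 0.
Proof.
  intros Hk Hl. pose proof PI_RGT_0.
  assert (HN : 0 < INR N) by (apply lt_0_INR; lia).
  set (h := PI * (INR k - INR l) / INR N).
  assert (Hphase : forall j, phase N j k - phase N j l = 2 * h * INR j).
  { intros j. unfold phase, h. rewrite !mult_INR. field. lra. }
  rewrite (sumN_ext N _ _ (fun j _ => f_equal cos (Hphase j))),
          (sumN_ext N _ _ (fun j _ => f_equal sin (Hphase j))).
  destruct (Nat.eq_dec k l) as [<-|Hkl].
  - replace h with 0 by (unfold h; field; lra).
    rewrite (sumN_ext N _ (fun _ => 1)), (sumN_ext N (fun j => sin _) (fun _ => 0)),
      !sumN_const by (intros; rewrite Rmult_0_r, Rmult_0_l; auto using sin_0, cos_0).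
    split; ring.
  - (* 0 < |h| < pi, so sin h <> 0, and 2 h N - h differs from -h by a multiple of 2 pi. *)
    assert (Hsh : sin h <> 0).
    { apply lt_INR in Hk, Hl. pose proof (pos_INR k). pose proof (pos_INR l).
      set (r := (INR k - INR l) / INR N).
      assert (Hr : r * INR N = INR k - INR l) by (unfold r; field; lra).
      replace h with (PI * r) by (unfold h, r; field; lra).
      destruct (proj1 (Nat.lt_gt_cases k l) Hkl) as [Hc|Hc]; apply lt_INR in Hc.
      - apply Rlt_not_eq, sin_lt_0_var; nra.
      - apply Rgt_not_eq, sin_gt_0; nra. }
    assert (Hend : 2 * h * INR N - h + 2 * INR l * PI = - h + 2 * INR k * PI)
      by (unfold h; field; lra).
    assert (Hs : sin (2 * h * INR N - h) = - sin h).
    { rewrite <- sin_neg, <- (sin_period _ l), <- (sin_period (- h) k), Hend. reflexivity. }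
    assert (Hc : cos (2 * h * INR N - h) = cos h).
    { rewrite <- (cos_neg h), <- (cos_period _ l), <- (cos_period (- h) k), Hend. reflexivity. }
    pose proof (cos_sum_telescope N h) as Tc. pose proof (sin_sum_telescope N h) as Ts.
    rewrite Hs in Tc. rewrite Hc in Ts.
    split; apply (Rmult_eq_reg_r (2 * sin h)); lra.
Qed.

Lemma dft_sq_expand N a b j :
  xre N a b j * xre N a b j + xim N a b j * xim N a b j =
  sumN N (fun k => sumN N (fun l =>
     (a k * a l + b k * b l) * cos (phase N j k - phase N j l)
   + (a k * b l - b k * a l) * sin (phase N j k - phase N j l))).
Proof.
  unfold xre, xim. rewrite !sumN_mul, <- sumN_plus. apply sumN_ext. intros k _.
  rewrite <- sumN_plus. apply sumN_ext. intros l _. unfold phase.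
  rewrite cos_minus, sin_minus. ring.
Qed.

Lemma parseval N a b :
  sumN N (fun j => xre N a b j * xre N a b j + xim N a b j * xim N a b j) =
  INR N * sumN N (fun k => a k * a k + b k * b k).
Proof.
  rewrite (sumN_ext N _ _ (fun j _ => dft_sq_expand N a b j)), sumN_swap, <- sumN_scal.
  apply sumN_ext. intros k Hk. rewrite sumN_swap.
  rewrite (sumN_ext N _ (fun l => if Nat.eq_dec k l then INR N * (a l * a l + b l * b l) else 0)).
  - rewrite sumN_delta by auto. reflexivity.
  - intros l Hl. rewrite sumN_plus, !sumN_scal.
    destruct (dft_orthogonality N k l Hk Hl) as [-> ->].
    destruct (Nat.eq_dec k l) as [<-|]; ring.
Qed.

Lemma dft_le_l1 N a b j :
  cmod (xre N a b j) (xim N a b j) <= sumN N (fun k => cmod (a k) (b k)).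
Proof.
  eapply Rle_trans; [apply cmod_sumN|]. right. apply sumN_ext. intros k _.
  apply cmod_rotate. pose proof (sin2_cos2 (phase N j k)) as H. unfold Rsqr, phase in H. lra.
Qed.

Definition restrict (S : nat -> bool) (a : nat -> R) (k : nat) : R := if S k then a k else 0.

Lemma dft_restrict_le N a b S j :
  cmod (xre N a b j) (xim N a b j) <=
  cmod (xre N (restrict S a) (restrict S b) j) (xim N (restrict S a) (restrict S b) j)
  + sumN N (fun k => if S k then 0 else cmod (a k) (b k)).
Proof.
  set (Sc := fun k => negb (S k)).
  assert (Hre : xre N a b j = xre N (restrict S a) (restrict S b) j
                              + xre N (restrict Sc a) (restrict Sc b) j).
  { unfold xre. rewrite <- sumN_plus. apply sumN_ext. intros k _.
    unfold restrict, Sc. destruct (S k); simpl; ring. }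
  assert (Him : xim N a b j = xim N (restrict S a) (restrict S b) j
                              + xim N (restrict Sc a) (restrict Sc b) j).
  { unfold xim. rewrite <- sumN_plus. apply sumN_ext. intros k _.
    unfold restrict, Sc. destruct (S k); simpl; ring. }
  rewrite Hre, Him. eapply Rle_trans; [apply cmod_triangle|]. apply Rplus_le_compat_l.
  eapply Rle_trans; [apply dft_le_l1|]. apply sumN_le. intros k _.
  unfold restrict, Sc. destruct (S k); simpl; [rewrite cmod_00|]; lra.
Qed.

Lemma parseval_restrict N a b S :
  sumN N (fun j => cmod (xre N (restrict S a) (restrict S b) j)
                        (xim N (restrict S a) (restrict S b) j) ^ 2) =
  INR N * sumN N (fun k => if S k then cmod (a k) (b k) ^ 2 else 0).
Proof.
  assert (Hsq : forall u v, cmod u v ^ 2 = u * u + v * v) by (intros; rewrite <- cmod_sq; ring).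
  rewrite (sumN_ext N _ _ (fun j _ => Hsq _ _)), parseval.
  f_equal. apply sumN_ext. intros k _. unfold restrict.
  destruct (S k); [rewrite Hsq|]; ring.
Qed.

Lemma rpow_le_double p t y : 0 < p -> 0 < t -> y <= 2 * t -> rpow y p <= rpow 2 p * rpow t p.
Proof. intros Hp Ht Hy. rewrite <- rpow_mult by lra. apply rpow_le; lra. Qed.

Lemma dyadic_layer_bound p u y M :
  0 < p -> 0 < u -> y <= 2 ^ S M * u ->
  rpow y p <= rpow u p +
    rpow 2 p * sumN (S M) (fun m => if Rlt_dec (2 ^ m * u) y then rpow (2 ^ m * u) p else 0).
Proof.
  intros Hp Hu HyM.
  assert (Hlevels : forall M, 0 <= sumN M (fun m => if Rlt_dec (2 ^ m * u) y
                                                    then rpow (2 ^ m * u) p else 0)).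
  { intros M'. apply sumN_nonneg. intros m _. destruct (Rlt_dec _ _); [apply rpow_ge0|lra]. }
  assert (H2p : 0 < rpow 2 p) by (apply rpow_gt0; lra).
  destruct (Rle_dec y u) as [Hyu|Hyu].
  { pose proof (rpow_le y u p ltac:(lra) Hyu). specialize (Hlevels (S M)). nra. }
  cut (rpow y p <= rpow 2 p * sumN (S M) (fun m => if Rlt_dec (2 ^ m * u) y
                                                   then rpow (2 ^ m * u) p else 0)).
  { pose proof (rpow_ge0 u p). lra. }
  induction M as [|M IH].
  - simpl sumN. simpl pow. rewrite !Rmult_1_l, Rplus_0_l.
    destruct (Rlt_dec u y); [|lra]. apply rpow_le_double; simpl in HyM; lra.
  - change (sumN (S (S M)) ?f) with (sumN (S M) f + f (S M)); cbv beta.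
    set (t := 2 ^ S M * u).
    assert (Ht : 0 < t) by (apply Rmult_lt_0_compat; [apply pow_lt|]; lra).
    destruct (Rle_dec y t) as [Hyt|Hyt].
    + assert (0 <= if Rlt_dec t y then rpow t p else 0) by (destruct (Rlt_dec _ _); [apply rpow_ge0|lra]).
      specialize (IH Hyt). nra.
    + destruct (Rlt_dec t y) as [_|]; [|lra].
      assert (rpow y p <= rpow 2 p * rpow t p) by (apply rpow_le_double; [lra|lra|unfold t; simpl in HyM |- *; lra]).
      specialize (Hlevels (S M)). nra.
Qed.

(* Truncated geometric series: the sum of (2^m u)^e over the levels with 2^m u r <= A is at
   most c_e (A/r)^e, where c_e = 2^e / (2^e - 1) does not depend on u, r, A or M. *)
Definition geom_const (e : R) : R := rpow 2 e / (rpow 2 e - 1).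

Lemma geom_const_ge0 e : 0 < e -> 0 <= geom_const e.
Proof. intros He. pose proof (rpow_two_gt1 e He). apply Rdiv_le_0_compat; lra. Qed.

Lemma dyadic_geometric_bound e u r A M : 0 < e -> 0 < u -> 0 < r -> 0 < A ->
  sumN (S M) (fun m => if Rle_dec (2 ^ m * u * r) A then rpow (2 ^ m * u) e else 0)
  <= geom_const e * rpow (A / r) e.
Proof.
  intros He Hu Hr HA.
  set (w := rpow 2 e). set (c := geom_const e).
  assert (Hw : 1 < w) by (apply rpow_two_gt1; auto).
  assert (Hc : c = w / (w - 1)) by reflexivity.
  assert (Hc1 : 1 <= c) by (rewrite Hc; apply (Rmult_le_reg_r (w - 1)); [lra|]; field_simplify; lra).
  assert (Hlevel : forall m, 2 ^ m * u * r <= A -> rpow (2 ^ m * u) e <= rpow (A / r) e).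
  { intros m Hm. apply rpow_le; [lra|]. apply (Rmult_le_reg_r r); [lra|].
    replace (A / r * r) with A by (field; lra). lra. }
  assert (Hstep : forall m, rpow (2 ^ S m * u) e = w * rpow (2 ^ m * u) e).
  { intros m. unfold w. rewrite <- rpow_mult by (try apply Rmult_le_pos; try left; try apply pow_lt; lra).
    f_equal. simpl; ring. }
  (* Invariant: the partial sum is bounded both by c (A/r)^e and by c times its last level. *)
  enough (Hinv : forall M, sumN (S M) (fun m => if Rle_dec (2 ^ m * u * r) A then rpow (2 ^ m * u) e else 0)
                 <= c * rpow (A / r) e /\
                 sumN (S M) (fun m => if Rle_dec (2 ^ m * u * r) A then rpow (2 ^ m * u) e else 0)
                 <= c * rpow (2 ^ M * u) e) by apply Hinv.
  clear M. intros M. pose proof (rpow_ge0 (A / r) e).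
  induction M as [|M [IH1 IH2]].
  - change (sumN 1 ?f) with (0 + f 0%nat); cbv beta. rewrite Rplus_0_l.
    pose proof (rpow_ge0 (2 ^ 0 * u) e).
    destruct (Rle_dec _ _) as [Hm|]; [pose proof (Hlevel 0%nat Hm)|]; split; nra.
  - change (sumN (S (S M)) ?f) with (sumN (S M) f + f (S M)); cbv beta.
    rewrite Hstep. pose proof (rpow_ge0 (2 ^ M * u) e).
    destruct (Rle_dec _ _) as [Hm|].
    + pose proof (Hlevel _ Hm). rewrite Hstep in H1.
      assert (Hgeom : c * rpow (2 ^ M * u) e + w * rpow (2 ^ M * u) e = c * (w * rpow (2 ^ M * u) e))
        by (rewrite Hc; field; lra).
      assert (c * (w * rpow (2 ^ M * u) e) <= c * rpow (A / r) e)
        by (apply Rmult_le_compat_l; lra).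
      split; lra.
    + assert (c * rpow (2 ^ M * u) e <= c * (w * rpow (2 ^ M * u) e))
        by (apply Rmult_le_compat_l; nra).
      split; lra.
Qed.

(** * A Hausdorff–Young inequality for the discrete Fourier transform *)

Definition hy_const (p : R) : R := 1 + 4 * rpow 2 p * rpow 2 (p - 2) * geom_const (p - 2).

Lemma hy_const_ge0 p : 2 < p -> 0 <= hy_const p.
Proof.
  intros Hp. pose proof (geom_const_ge0 (p - 2) ltac:(lra)).
  pose proof (rpow_ge0 2 p). pose proof (rpow_ge0 2 (p - 2)).
  assert (0 <= 4 * rpow 2 p * rpow 2 (p - 2) * geom_const (p - 2))
    by (apply Rmult_le_pos; [apply Rmult_le_pos; [apply Rmult_le_pos|]|]; lra).
  unfold hy_const. lra.
Qed.

Section HausdorffYoung.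

Variables (p : R) (N : nat) (a b : nat -> R).
Hypothesis Hp : 2 < p.

Let e := / (p - 1).
Let q := p / (p - 1).
Let Q := sumN N (fun k => rpow (cmod (a k) (b k)) q).

Lemma rpow_dual_exponent x : 0 <= x -> rpow x q = x * rpow x e.
Proof.
  intros Hx. replace q with (1 + e) by (unfold q, e; field; lra).
  rewrite rpow_plus, rpow_1; auto.
Qed.

Definition low (t : R) (k : nat) : bool :=
  if Rle_dec (t * rpow (cmod (a k) (b k)) e) (2 * Q) then true else false.

Definition low_dft (t : R) (j : nat) : R :=
  cmod (xre N (restrict (low t) a) (restrict (low t) b) j)
       (xim N (restrict (low t) a) (restrict (low t) b) j).

Lemma high_l1_bound t : 0 < t -> 0 < Q ->
  sumN N (fun k => if low t k then 0 else cmod (a k) (b k)) <= t / 2.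
Proof.
  intros Ht HQ.
  apply Rle_trans with (sumN N (fun k => t / (2 * Q) * rpow (cmod (a k) (b k)) q)).
  - apply sumN_le. intros k _. pose proof (cmod_ge0 (a k) (b k)). pose proof (rpow_ge0 (cmod (a k) (b k)) q).
    assert (0 <= t / (2 * Q)) by (apply Rdiv_le_0_compat; lra).
    unfold low. destruct (Rle_dec _ _) as [|Hhigh]; [nra|].
    rewrite rpow_dual_exponent by auto. apply (Rmult_le_reg_r (2 * Q)); [lra|].
    replace (t / (2 * Q) * (cmod (a k) (b k) * rpow (cmod (a k) (b k)) e) * (2 * Q))
      with (cmod (a k) (b k) * (t * rpow (cmod (a k) (b k)) e)) by (field; lra).
    apply Rmult_le_compat_l; lra.
  - rewrite sumN_scal. fold Q. right. field. lra.
Qed.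

(* If |x_j| exceeds the level t then the low part exceeds t/2, whence t^p <= 4 t^(p-2) |low part|^2. *)
Lemma level_chebyshev t j : 0 < t -> 0 < Q ->
  t < cmod (xre N a b j) (xim N a b j) -> rpow t p <= 4 * rpow t (p - 2) * low_dft t j ^ 2.
Proof.
  intros Ht HQ Hlt.
  pose proof (dft_restrict_le N a b (low t) j). pose proof (high_l1_bound t Ht HQ).
  assert (Hlow : t / 2 < low_dft t j) by (unfold low_dft; lra).
  replace p with ((p - 2) + 2) at 1 by ring. rewrite rpow_plus, rpow_2 by lra.
  pose proof (rpow_ge0 t (p - 2)).
  assert (t * t <= 4 * low_dft t j ^ 2) by (simpl; nra). nra.
Qed.

(* For a fixed coefficient, its contributions |z_k|^2 (2^m u)^(p-2) over the levels where it is low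
   form a truncated geometric series, bounded by a multiple of |z_k|^q. *)
Lemma low_levels_geometric k u M : 0 < u -> 0 < Q ->
  sumN (S M) (fun m => if low (2 ^ m * u) k then cmod (a k) (b k) ^ 2 * rpow (2 ^ m * u) (p - 2) else 0)
  <= geom_const (p - 2) * rpow (2 * Q) (p - 2) * rpow (cmod (a k) (b k)) q.
Proof.
  intros Hu HQ. pose proof (cmod_ge0 (a k) (b k)) as Hc. set (c := cmod (a k) (b k)) in *.
  pose proof (geom_const_ge0 (p - 2) ltac:(lra)) as Hg.
  destruct (Req_dec c 0) as [Hc0|Hc0].
  { rewrite Hc0, (sumN_ext _ _ (fun _ => 0)), sumN_const, (rpow_nonpos 0 q) by
      (try lra; intros m _; destruct (low _ _); simpl; ring). lra. }
  set (r := rpow c e). assert (Hr : 0 < r) by (apply rpow_gt0; lra).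
  rewrite (sumN_ext _ _ (fun m => c ^ 2 * (if Rle_dec (2 ^ m * u * r) (2 * Q)
                                           then rpow (2 ^ m * u) (p - 2) else 0))), sumN_scal
    by (intros m _; unfold low; fold c r; destruct (Rle_dec _ _); ring).
  eapply Rle_trans.
  { apply Rmult_le_compat_l; [apply pow2_ge_0|].
    apply dyadic_geometric_bound; lra. }
  (* c^2 ((2Q)/r)^(p-2) = (2Q)^(p-2) c^q, since 2 - e (p-2) = q. *)
  assert (0 < / r) by (apply Rinv_0_lt_compat; lra).
  unfold Rdiv. rewrite (rpow_mult (2 * Q) (/ r)), rpow_inv by lra.
  unfold r. rewrite rpow_rpow by lra.
  assert (Hexp : rpow c q * rpow c (e * (p - 2)) = c ^ 2).
  { replace (c ^ 2) with (rpow c 2) by (rewrite rpow_2; [simpl; ring|lra]).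
    rewrite <- rpow_plus by lra. f_equal. unfold q, e. field. lra. }
  assert (0 < rpow c (e * (p - 2))) by (apply rpow_gt0; lra).
  rewrite <- Hexp. right. field. lra.
Qed.

(* Summing the level bounds over j, by Parseval's identity and the geometric bound. *)
Lemma levels_energy u M : 0 < u -> 0 < Q ->
  sumN N (fun j => sumN (S M) (fun m => rpow (2 ^ m * u) (p - 2) * low_dft (2 ^ m * u) j ^ 2))
  <= INR N * (geom_const (p - 2) * rpow (2 * Q) (p - 2) * Q).
Proof.
  intros Hu HQ. rewrite sumN_swap.
  rewrite (sumN_ext (S M) _ (fun m => INR N * sumN N (fun k =>
     if low (2 ^ m * u) k then cmod (a k) (b k) ^ 2 * rpow (2 ^ m * u) (p - 2) else 0))).
  - rewrite sumN_scal, sumN_swap. apply Rmult_le_compat_l; [apply pos_INR|].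
    unfold Q. rewrite <- sumN_scal. apply sumN_le. intros k _.
    apply low_levels_geometric; auto.
  - intros m _. rewrite sumN_scal. unfold low_dft. rewrite parseval_restrict.
    rewrite (sumN_ext N (fun k => if low (2 ^ m * u) k
                                  then cmod (a k) (b k) ^ 2 * rpow (2 ^ m * u) (p - 2) else 0)
                        (fun k => rpow (2 ^ m * u) (p - 2) *
               (if low (2 ^ m * u) k then cmod (a k) (b k) ^ 2 else 0))), sumN_scal
      by (intros k _; destruct (low _ _); ring).
    ring.
Qed.

Lemma dft_vanishes j : Q <= 0 -> cmod (xre N a b j) (xim N a b j) = 0.
Proof.
  intros HQ. apply Rle_antisym; [|apply cmod_ge0].
  rewrite <- (Rmult_0_r (INR N)), <- sumN_const.
  eapply Rle_trans; [apply dft_le_l1|]. apply sumN_le. intros k Hk.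
  destruct (Rle_dec (cmod (a k) (b k)) 0) as [|Hpos]; [lra|]. exfalso.
  assert (0 < rpow (cmod (a k) (b k)) q) by (apply rpow_gt0; lra).
  assert (rpow (cmod (a k) (b k)) q <= Q)
    by (apply (sumN_term_le N (fun k => rpow (cmod (a k) (b k)) q)); auto using rpow_ge0).
  lra.
Qed.

Lemma pointwise_levels u M j : 0 < u -> 0 < Q ->
  cmod (xre N a b j) (xim N a b j) <= 2 ^ S M * u ->
  rpow (cmod (xre N a b j) (xim N a b j)) p <= rpow u p +
    4 * rpow 2 p * sumN (S M) (fun m => rpow (2 ^ m * u) (p - 2) * low_dft (2 ^ m * u) j ^ 2).
Proof.
  intros Hu HQ Htop. eapply Rle_trans; [apply (dyadic_layer_bound p u _ M); auto; lra|].
  rewrite <- !sumN_scal. apply Rplus_le_compat_l, sumN_le. intros m _.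
  pose proof (rpow_gt0 2 p ltac:(lra)).
  assert (Ht : 0 < 2 ^ m * u) by (apply Rmult_lt_0_compat; [apply pow_lt|]; lra).
  destruct (Rlt_dec _ _) as [Hlt|].
  - pose proof (level_chebyshev _ j Ht HQ Hlt). nra.
  - rewrite Rmult_0_r.
    apply Rmult_le_pos; [lra|apply Rmult_le_pos; [apply rpow_ge0|apply pow2_ge_0]].
Qed.

Theorem hausdorff_young_gt2 : xnorm_pp N a b p <= INR N * hy_const p * rpow Q (p - 1).
Proof.
  pose proof (pos_INR N) as HN. pose proof (rpow_ge0 Q (p - 1)). pose proof (hy_const_ge0 p Hp).
  unfold xnorm_pp. destruct (Rle_dec Q 0) as [HQ|HQ].
  { rewrite (sumN_ext N _ (fun _ => 0)), sumN_const.
    - rewrite Rmult_0_r. repeat apply Rmult_le_pos; auto.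
    - intros j _. rewrite dft_vanishes by auto. apply rpow_nonpos; lra. }
  (* The levels start at u = Q^((p-1)/p) and reach 2^(M+1) u >= ||z||_1 >= ||x||_oo. *)
  set (u := rpow Q ((p - 1) / p)).
  assert (Hu : 0 < u) by (apply rpow_gt0; lra).
  assert (Hup : rpow u p = rpow Q (p - 1)) by (unfold u; rewrite rpow_rpow by lra; f_equal; field; lra).
  destruct (Pow_x_infinity 2 ltac:(rewrite Rabs_right; lra) (sumN N (fun k => cmod (a k) (b k)) / u))
    as [M HM].
  specialize (HM (S M) ltac:(lia)). rewrite Rabs_right in HM by (left; apply pow_lt; lra).
  assert (Htop : forall j, cmod (xre N a b j) (xim N a b j) <= 2 ^ S M * u).
  { intros j. eapply Rle_trans; [apply dft_le_l1|]. apply (Rmult_le_reg_r (/ u)).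
    - apply Rinv_0_lt_compat; lra.
    - replace (2 ^ S M * u * / u) with (2 ^ S M) by (field; lra). lra. }
  eapply Rle_trans; [apply sumN_le; intros j _; apply (pointwise_levels u M j); auto; lra|].
  rewrite sumN_plus, sumN_const, sumN_scal, Hup.
  pose proof (levels_energy u M Hu ltac:(lra)) as Henergy.
  pose proof (rpow_ge0 2 p).
  assert (HQp : rpow (2 * Q) (p - 2) * Q = rpow 2 (p - 2) * rpow Q (p - 1)).
  { rewrite rpow_mult by lra. replace (p - 1) with ((p - 2) + 1) by ring.
    rewrite rpow_plus, rpow_1 by lra. ring. }
  rewrite Rmult_assoc with (r1 := geom_const (p - 2)), HQp in Henergy.
  unfold hy_const. nra.
Qed.

End HausdorffYoung.

(* The constant for all p >= 2; for p = 2 the inequality is Parseval's identity. *)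
Definition hy_const_ge2 (p : R) : R := if Rle_dec p 2 then 1 else hy_const p.

Lemma hy_const_ge2_nonneg p : 0 <= hy_const_ge2 p.
Proof.
  unfold hy_const_ge2. destruct (Rle_dec p 2); [lra|apply hy_const_ge0; lra].
Qed.

Theorem hausdorff_young p N a b : 2 <= p ->
  xnorm_pp N a b p <=
  INR N * hy_const_ge2 p * rpow (sumN N (fun k => rpow (cmod (a k) (b k)) (p / (p - 1)))) (p - 1).
Proof.
  intros Hp. unfold hy_const_ge2. destruct (Rle_dec p 2); [|apply hausdorff_young_gt2; lra].
  replace p with 2 by lra. replace (2 / (2 - 1)) with 2 by field. replace (2 - 1) with 1 by ring.
  rewrite rpow_1, Rmult_1_r by (apply sumN_nonneg; intros; apply rpow_ge0).
  unfold xnorm_pp. right.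
  rewrite (sumN_ext N _ (fun j => xre N a b j * xre N a b j + xim N a b j * xim N a b j)),
    parseval by (intros; rewrite rpow_2, cmod_sq by apply cmod_ge0; reflexivity).
  f_equal. apply sumN_ext. intros k _. rewrite rpow_2, cmod_sq by apply cmod_ge0. reflexivity.
Qed.

(** * A lower bound on the eigenvalues [lambda_{k,N}] *)

Lemma sin_lb_ge_third x : 0 <= x <= 2 -> x / 3 <= sin_lb x.
Proof.
  intros Hx. unfold sin_lb, sin_approx. cbv [sum_f_R0]. unfold sin_term.
  rewrite !INR_IZR_INZ.
  replace (Z.of_nat (fact (2*0+1))) with 1%Z by reflexivity.
  replace (Z.of_nat (fact (2*1+1))) with 6%Z by reflexivity.
  replace (Z.of_nat (fact (2*2+1))) with 120%Z by reflexivity.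
  replace (Z.of_nat (fact (2*3+1))) with 5040%Z by reflexivity.
  simpl pow. assert (0 <= x * x <= 4) by nra.
  assert (x*x*x*x*x*x*x / 5040 <= x*x*x*x*x / 120).
  { assert (0 <= x*x*x*x*x) by (repeat apply Rmult_le_pos; lra). unfold Rdiv. nra. }
  assert (x*x*x / 6 <= 2/3 * x) by nra.
  nra.
Qed.

Lemma sin_ge_third x : 0 <= x <= PI / 2 -> x / 3 <= sin x.
Proof.
  intros Hx. pose proof PI_4. pose proof PI_RGT_0.
  eapply Rle_trans; [apply sin_lb_ge_third; lra|]. apply SIN; lra.
Qed.

Lemma sin_ratio_lower m x : 1 <= m -> 0 < x -> m * x <= PI / 2 ->
  1 <= sin (m * x) / sin x /\ m / 3 <= sin (m * x) / sin x.
Proof.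
  intros Hm Hx Hmx. pose proof PI_RGT_0.
  assert (Hxm : x <= m * x) by nra.
  assert (Hs1 : 0 < sin x) by (apply sin_gt_0; lra).
  assert (sin x < x) by (apply sin_lt_x; auto).
  assert (sin x <= sin (m * x)) by (apply sin_incr_1; lra).
  assert (m * x / 3 <= sin (m * x)) by (apply sin_ge_third; nra).
  split; apply (Rmult_le_reg_r (sin x)); auto;
    replace (sin (m * x) / sin x * sin x) with (sin (m * x)) by (field; lra); nra.
Qed.

Lemma lambda_lower_bound mu N k : 1 < mu -> (3 <= N)%nat -> (1 <= k < N)%nat ->
  (mu - 1) / 9 * INR (Nat.min k (N - k)) ^ 2 <= lambda (mu * gamma1 N) N k.
Proof.
  intros Hmu HN Hk. set (m := Nat.min k (N - k)). pose proof PI_RGT_0.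
  assert (HNr : 3 <= INR N) by (replace 3 with (INR 3) by (simpl; lra); apply le_INR; auto).
  assert (Hm1 : 1 <= INR m) by (replace 1 with (INR 1) by reflexivity; apply le_INR; unfold m; lia).
  assert (Hm2 : 2 * INR m <= INR N)
    by (replace 2 with (INR 2) by reflexivity; rewrite <- mult_INR; apply le_INR; unfold m; lia).
  set (x := PI / INR N). assert (Hx : 0 < x) by (apply Rdiv_lt_0_compat; lra).
  (* By the symmetry k <-> N - k, only m matters. *)
  assert (Hsym : sin (INR k * PI / INR N) = sin (INR m * x)).
  { unfold m, x. destruct (Nat.min_spec k (N - k)) as [[_ ->]|[_ ->]]; [f_equal; field; lra|].
    rewrite minus_INR by lia. rewrite <- sin_PI_x. f_equal. field. lra. }
  assert (Hmx : INR m * x <= PI / 2).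
  { unfold x. apply (Rmult_le_reg_r (INR N)); [lra|].
    replace (INR m * (PI / INR N) * INR N) with (INR m * PI) by (field; lra). nra. }
  destruct (sin_ratio_lower (INR m) x Hm1 Hx Hmx) as [HR1 HR2].
  set (R := sin (INR m * x) / sin x) in *.
  assert (Hs1 : 0 < sin x) by (apply sin_gt_0; nra).
  assert (Hlam : lambda (mu * gamma1 N) N k = -1 + mu * R ^ 2).
  { unfold lambda, gamma1, R. rewrite Hsym. fold x. field. lra. }
  rewrite Hlam. destruct (Rle_dec (INR m) 3).
  - assert (INR m ^ 2 <= 9) by (simpl; nra).
    assert ((mu - 1) / 9 * INR m ^ 2 <= (mu - 1) / 9 * 9) by (apply Rmult_le_compat_l; lra).
    assert (mu * 1 <= mu * R ^ 2) by (apply Rmult_le_compat_l; simpl; nra).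
    lra.
  - assert (9 <= INR m ^ 2) by (simpl; nra).
    assert (mu * (INR m ^ 2 / 9) <= mu * R ^ 2).
    { apply Rmult_le_compat_l; [lra|]. replace (INR m ^ 2 / 9) with ((INR m / 3) ^ 2) by field.
      simpl. nra. }
    lra.
Qed.

(** * The l^q norm of a point of the box [C_delta] *)

Definition kq_term (rho : nat -> R) (q : R) (m : nat) : R := rpow (rho m / INR m) q.

Section BoxEstimate.

Variables (mu q : R) (rho : nat -> R) (delta : R) (N : nat) (a b : nat -> R).
Hypothesis Hmu : 1 < mu.
Hypothesis Hq : 0 < q.
Hypothesis Hrho : forall k, (1 <= k)%nat -> 0 < rho k.
Hypothesis HN : (3 <= N)%nat.
Hypothesis Hdelta : 0 < delta.
Hypothesis Hbox : forall k, (k < N)%nat ->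
  cmod (a k) (b k) <= delta * rkN rho N k / sqrt (Rabs (lambda (mu * gamma1 N) N k)).

Let eps := (mu - 1) / 9.

(* lambda_0 = -1 and r_0 = 1, so |z_0| <= delta. *)
Lemma box_coef_zero : cmod (a 0) (b 0) <= delta.
Proof.
  pose proof (Hbox 0 ltac:(lia)) as H. unfold rkN, lambda in H. simpl Nat.eqb in H.
  replace (INR 0 * PI / INR N) with 0 in H by (simpl; field; apply not_0_INR; lia).
  rewrite sin_0 in H. replace (Rabs (-1 + 2 * (mu * gamma1 N) * 0 ^ 2)) with 1 in H
    by (rewrite Rabs_left; simpl; lra).
  rewrite sqrt_1 in H. lra.
Qed.

Lemma box_coef k : (1 <= k < N)%nat ->
  cmod (a k) (b k) <=
  delta / sqrt eps * (rho (Nat.min k (N - k)) / INR (Nat.min k (N - k))).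
Proof.
  intros Hk. pose proof (Hbox k ltac:(lia)) as H. set (m := Nat.min k (N - k)) in *.
  assert (Hm : (1 <= m)%nat) by (unfold m; lia).
  assert (Hmr : 1 <= INR m) by (replace 1 with (INR 1) by reflexivity; apply le_INR; auto).
  pose proof (Hrho m Hm). assert (Heps : 0 < eps) by (unfold eps; lra).
  assert (Hlow := lambda_lower_bound mu N k Hmu HN Hk). fold m eps in Hlow.
  assert (0 < eps * INR m ^ 2) by (apply Rmult_lt_0_compat; [|apply pow_lt]; lra).
  rewrite Rabs_right in H by lra.
  assert (Hrk : rkN rho N k = rho m) by (unfold rkN; destruct (Nat.eqb_spec k 0); [lia|reflexivity]).
  assert (Hsq : sqrt eps * INR m <= sqrt (lambda (mu * gamma1 N) N k)).
  { rewrite <- (sqrt_pow2 (INR m)), <- sqrt_mult_alt by lra. apply sqrt_le_1_alt. exact Hlow. }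
  assert (Hse : 0 < sqrt eps) by (apply sqrt_lt_R0; auto).
  eapply Rle_trans; [exact H|]. rewrite Hrk.
  replace (delta / sqrt eps * (rho m / INR m)) with (delta * rho m / (sqrt eps * INR m)) by (field; lra).
  unfold Rdiv. apply Rmult_le_compat_l.
  - apply Rmult_le_pos; lra.
  - apply Rinv_le_contravar; [apply Rmult_lt_0_compat|]; lra.
Qed.

Lemma box_coef_q k : (1 <= k < N)%nat ->
  rpow (cmod (a k) (b k)) q <=
  rpow delta q * rpow (/ sqrt eps) q * (kq_term rho q k + kq_term rho q (N - k)).
Proof.
  intros Hk. pose proof (box_coef k Hk) as H. set (m := Nat.min k (N - k)) in *.
  assert (Hm : (1 <= m)%nat) by (unfold m; lia). pose proof (Hrho m Hm).
  assert (Hmr : 0 < INR m) by (apply lt_0_INR; lia).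
  assert (0 < / sqrt eps) by (apply Rinv_0_lt_compat, sqrt_lt_R0; unfold eps; lra).
  eapply Rle_trans; [apply rpow_le; [lra|exact H]|].
  assert (0 <= rho m / INR m) by (apply Rdiv_le_0_compat; lra).
  assert (0 <= delta * / sqrt eps) by (apply Rmult_le_pos; lra).
  unfold Rdiv at 1.
  rewrite (rpow_mult (delta * / sqrt eps)), (rpow_mult delta) by lra.
  fold (kq_term rho q m).
  assert (Hsplit : kq_term rho q m <= kq_term rho q k + kq_term rho q (N - k)).
  { pose proof (rpow_ge0 (rho k / INR k) q). pose proof (rpow_ge0 (rho (N - k)%nat / INR (N - k)) q).
    unfold m, kq_term. destruct (Nat.min_spec k (N - k)) as [[_ ->]|[_ ->]]; lra. }
  apply Rmult_le_compat_l; [apply Rmult_le_pos; apply rpow_ge0|exact Hsplit].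
Qed.

Lemma box_lq_bound l : (forall n, sumN n (fun k => kq_term rho q (S k)) <= l) ->
  sumN N (fun k => rpow (cmod (a k) (b k)) q) <= rpow delta q * (1 + 2 * rpow (/ sqrt eps) q * l).
Proof.
  intros Hl. set (C := rpow delta q * rpow (/ sqrt eps) q).
  replace N with (S (N - 1)) at 1 by lia. rewrite sumN_shift.
  pose proof (rpow_le _ _ q ltac:(lra) box_coef_zero).
  assert (Hterms : sumN (N - 1) (fun k => rpow (cmod (a (S k)) (b (S k))) q)
                   <= C * (sumN (N - 1) (fun k => kq_term rho q (S k))
                           + sumN (N - 1) (fun k => kq_term rho q (N - S k)%nat))).
  { rewrite <- sumN_plus, <- sumN_scal. apply sumN_le. intros k Hk. apply box_coef_q. lia. }
  (* Reversing the order of summation turns the terms of index N - k into those of index k. *)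
  rewrite (sumN_reverse (N - 1) (fun k => kq_term rho q (N - S k)%nat)) in Hterms.
  rewrite (sumN_ext (N - 1) (fun k => kq_term rho q (N - S (N - 1 - 1 - k))%nat)
             (fun k => kq_term rho q (S k))) in Hterms
    by (intros k Hk; f_equal; lia).
  pose proof (Hl (N - 1)%nat).
  assert (0 <= C) by (apply Rmult_le_pos; apply rpow_ge0).
  assert (C * (2 * sumN (N - 1) (fun k => kq_term rho q (S k))) <= C * (2 * l))
    by (apply Rmult_le_compat_l; lra).
  unfold C in *. lra.
Qed.

End BoxEstimate.

Theorem lemma4p3 (mu p : R) (rho : nat -> R) :
  1 < mu ->
  2 <= p ->
  (forall k, (1 <= k)%nat -> 0 < rho k) ->
  (forall k, (1 <= k)%nat -> rho k <= rho (S k)) ->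
  Kq_finite rho (p / (p - 1)) ->
  exists Bp : R,
    forall (N : nat) (delta : R) (a b : nat -> R),
      (3 <= N)%nat ->
      0 < delta ->
      in_Cdelta (mu * gamma1 N) rho delta N a b ->
      xnorm_pp N a b p <= rpow delta p * INR N * Bp.
Proof.
  intros Hmu Hp Hrho _ [l Hl].
  set (q := p / (p - 1)) in *.
  assert (Hq : 0 < q) by (apply Rdiv_lt_0_compat; lra).
  assert (Hpartial : forall n, sumN n (fun k => kq_term rho q (S k)) <= l)
    by (apply sumN_le_series_limit; [intros; apply rpow_ge0|exact Hl]).
  set (K := 1 + 2 * rpow (/ sqrt ((mu - 1) / 9)) q * l).
  exists (hy_const_ge2 p * rpow K (p - 1)).
  intros N delta a b HN Hdelta [_ Hbox].
  pose proof (box_lq_bound mu q rho delta N a b Hmu Hq Hrho HN Hdelta Hbox l Hpartial) as Hlq.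
  assert (HK : 0 <= K).
  { pose proof (Hpartial 0%nat) as Hl0. simpl in Hl0.
    pose proof (rpow_ge0 (/ sqrt ((mu - 1) / 9)) q). unfold K. nra. }
  pose proof (rpow_le_dual_power p delta K _ ltac:(lra) ltac:(lra) HK Hlq) as Hpow.
  eapply Rle_trans; [apply hausdorff_young; lra|]. fold q.
  pose proof (hy_const_ge2_nonneg p). pose proof (pos_INR N).
  assert (INR N * hy_const_ge2 p * rpow (sumN N (fun k => rpow (cmod (a k) (b k)) q)) (p - 1)
          <= INR N * hy_const_ge2 p * (rpow delta p * rpow K (p - 1)))
    by (apply Rmult_le_compat_l; [apply Rmult_le_pos|]; lra).
  lra.
Qed.
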